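(* Let $\mathbf{P}$ be a finite poset with a metric $d_{\mathbf{P}}$. Then $d_{\mathrm{GT}}:\mathrm{Ob}(\mathrm{vect}^{\mathbf{P}})\times\mathrm{Ob}(\mathrm{vect}^{\mathbf{P}})\to[0,+\infty]$ is an extended pseudometric, i.e. for all $\mathbf{P}$-modules $M,N,O$: $d_{\mathrm{GT}}(M,M)=0$, $d_{\mathrm{GT}}(M,N)=d_{\mathrm{GT}}(N,M)$, and $d_{\mathrm{GT}}(M,O)\le d_{\mathrm{GT}}(M,N)+d_{\mathrm{GT}}(N,O)$.
   Context: Fix a field $k$; $\mathrm{vect}$ is the category of finite-dimensional $k$-vector spaces. A finite poset is a category with a unique morphism $x\to y$ iff $x\le y$; a $\mathbf{P}$-module is a functor $\mathbf{P}\to\mathrm{vect}$, and $\mathrm{vect}^{\mathbf{P}}$ is their category. For a monotone map $g$, $g^*$ denotes precomposition with $g$. A Galois insertion $f:\mathbf{Q}\rightleftarrows\mathbf{P}:g$ consists of monotone maps $f:\mathbf{Q}\to\mathbf{P}$, $g:\mathbf{P}\to\mathbf{Q}$ with $f(u)\le x\iff u\le g(x)$ for all $u,x$, and $f\circ g=\mathrm{id}_{\mathbf{P}}$. A Galois coupling of $(M,N)$ is a tuple $(\mathbf{Q},f\dashv g,h\dashv i,\Gamma)$ with $\mathbf{Q}$ a finite poset, $f:\mathbf{Q}\rightleftarrows\mathbf{P}:g$ and $h:\mathbf{Q}\rightleftarrows\mathbf{P}:i$ Galois insertions, and $\Gamma\in\mathrm{vect}^{\mathbf{Q}}$ with $g^*\Gamma\cong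 M$ and $i^*\Gamma\cong N$. Its cost is $\mathrm{cost}(\Gamma)=\sup_{q\in\mathbf{Q}}d_{\mathbf{P}}(f(q),h(q))$. The Galois transport distance $d_{\mathrm{GT}}(M,N)$ is the infimum of the costs of all Galois couplings of $(M,N)$, and $\infty$ if there is none. *)

From HB Require Import structures.
From mathcomp Require Import all_boot all_order all_algebra.
From mathcomp Require Import boolp classical_sets reals constructive_ereal ereal.
Set Implicit Arguments. Unset Strict Implicit. Unset Printing Implicit Defensive.
Import Order.TTheory GRing.Theory Num.Theory.
Local Open Scope ring_scope.

(* A P-module (functor P -> vect), with vect modelled skeletally:
   the object at x is k^(pm_dim x) (row vectors), and for x <= y the
   structure map is a matrix acting on the right of row vectors. *)
Record pmod (k : fieldType) (d : Order.disp_t) (P : finPOrderType d) := PMod {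
  pm_dim : P -> nat;
  pm_map : forall x y : P, (x <= y)%O -> 'M[k]_(pm_dim x, pm_dim y);
  pm_map_id : forall (x : P) (h : (x <= x)%O), pm_map h = (1%:M)%R;
  pm_map_comp : forall (x y z : P) (hxy : (x <= y)%O) (hyz : (y <= z)%O)
      (hxz : (x <= z)%O), pm_map hxz = pm_map hxy *m pm_map hyz }.

Definition pmod_iso (k : fieldType) (d : Order.disp_t) (P : finPOrderType d)
    (M N : pmod k P) : Prop :=
  exists (phi : forall x : P, 'M[k]_(pm_dim M x, pm_dim N x))
         (psi : forall x : P, 'M[k]_(pm_dim N x, pm_dim M x)),
    [/\ forall x, phi x *m psi x = (1%:M)%R,
        forall x, psi x *m phi x = (1%:M)%R &
        forall (x y : P) (h : (x <= y)%O), pm_map M h *m phi y = phi x *m pm_map N h].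

Definition pullback (k : fieldType) (dq : Order.disp_t) (Q : finPOrderType dq)
    (d : Order.disp_t) (P : finPOrderType d) (g : P -> Q)
    (gm : {homo g : x y / (x <= y)%O}) (G : pmod k Q) : pmod k P :=
  @PMod k d P (fun x => pm_dim G (g x))
    (fun x y h => pm_map G (gm x y h))
    (fun x h => pm_map_id G (gm x x h))
    (fun x y z h1 h2 h3 => pm_map_comp G (gm x y h1) (gm y z h2) (gm x z h3)).

Record galois_ins (dq : Order.disp_t) (Q : finPOrderType dq)
    (d : Order.disp_t) (P : finPOrderType d) := GIns {
  gi_f : Q -> P;
  gi_g : P -> Q;
  gi_f_mono : {homo gi_f : u v / (u <= v)%O};
  gi_g_mono : {homo gi_g : x y / (x <= y)%O};
  gi_adj : forall (u : Q) (x : P), (gi_f u <= x)%O = (u <= gi_g x)%O;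
  gi_retr : forall x : P, gi_f (gi_g x) = x }.

Definition is_metric (R : realType) (T : Type) (dist : T -> T -> R) : Prop :=
  [/\ forall x y, dist x y = 0 <-> x = y,
      forall x y, dist x y = dist y x &
      forall x y z, (dist x z <= dist x y + dist y z)%R].

(* Cost of a coupling: sup over q of d_P(f q, h q) (0 for empty Q). *)
Definition coupling_cost (R : realType) (dq : Order.disp_t) (Q : finPOrderType dq)
    (d : Order.disp_t) (P : finPOrderType d) (dP : P -> P -> R)
    (fg hi : galois_ins Q P) : R :=
  \big[Num.max/0%R]_(q : Q) dP (gi_f fg q) (gi_f hi q).

Definition galois_coupling (k : fieldType) (dq : Order.disp_t) (Q : finPOrderType dq)
    (d : Order.disp_t) (P : finPOrderType d) (M N : pmod k P)
    (fg hi : galois_ins Q P) (G : pmod k Q) : Prop :=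
  pmod_iso (pullback (gi_g_mono fg) G) M /\ pmod_iso (pullback (gi_g_mono hi) G) N.

(* Galois transport distance: infimum of costs over all Galois couplings
   (over all finite posets Q); +oo if there is none. *)
Definition dGT (k : fieldType) (R : realType) (d : Order.disp_t) (P : finPOrderType d)
    (dP : P -> P -> R) (M N : pmod k P) : \bar R :=
  ereal_inf [set c : \bar R | exists (dq : Order.disp_t) (Q : finPOrderType dq)
      (fg hi : galois_ins Q P) (G : pmod k Q),
      galois_coupling M N fg hi G /\ c = ((coupling_cost dP fg hi)%:E)%E].

(* The identity coupling has cost 0, and swapping the two Galois insertions of a
   coupling of (M, N) gives a coupling of (N, M) of the same cost. For the
   triangle inequality, glue a coupling G1 of (M, N) over Q1 to a coupling G2 of
   (N, O) over Q2 along N: since i1^* G1 ~ N ~ g2^* G2, the module G1 on the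
   points (u, g2 (h1 u)) and G2 on the points (i1 (f2 v), v) of Q1 x Q2 fit into
   one module on their union. The projections of this union onto Q1 and Q2 are
   left adjoints of Galois insertions, so composing with f1 -| g1 and h2 -| i2
   yields a Galois coupling of (M, O). At every glued point h1 q.1 = f2 q.2, so the
   triangle inequality of d_P bounds its cost by the sum of the two costs. *)

From HB Require Import structures.
From mathcomp Require Import all_boot all_order all_algebra.
From mathcomp Require Import boolp classical_sets reals constructive_ereal ereal.
Set Implicit Arguments. Unset Strict Implicit. Unset Printing Implicit Defensive.
Import Order.TTheory GRing.Theory Num.Theory.
Local Open Scope ring_scope.

Section GaloisInsertion.
Variables (d1 : Order.disp_t) (Q1 : finPOrderType d1).
Variables (d2 : Order.disp_t) (Q2 : finPOrderType d2).
Variables (d : Order.disp_t) (P : finPOrderType d).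

Lemma gi_unit (gi : galois_ins Q1 P) u : (u <= gi_g gi (gi_f gi u))%O.
Proof. by rewrite -gi_adj. Qed.

Definition gi_id : galois_ins P P :=
  GIns (fun _ _ => id) (fun _ _ => id) (fun _ _ => erefl) (fun _ => erefl).

Variables (a : galois_ins Q1 Q2) (b : galois_ins Q2 P).

Lemma gi_comp_adj u x :
  (gi_f b (gi_f a u) <= x)%O = (u <= gi_g a (gi_g b x))%O.
Proof. by rewrite !gi_adj. Qed.

Lemma gi_comp_retr x : gi_f b (gi_f a (gi_g a (gi_g b x))) = x.
Proof. by rewrite !gi_retr. Qed.

Definition gi_comp : galois_ins Q1 P :=
  GIns (fun u v uv => gi_f_mono b (gi_f_mono a uv))
       (fun x y xy => gi_g_mono a (gi_g_mono b xy)) gi_comp_adj gi_comp_retr.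

End GaloisInsertion.

Section TotalMap.
Variables (k : fieldType) (d : Order.disp_t) (P : finPOrderType d) (G : pmod k P).

(* Extended by [0] when [x] is not below [y], so that maps between arbitrary
   points can be written without carrying order proofs. *)
Definition pm_tmap (x y : P) : 'M[k]_(pm_dim G x, pm_dim G y) :=
  match (x <= y)%O as b return ((x <= y)%O = b -> _) with
  | true => fun xy => pm_map G xy
  | false => fun _ => 0
  end erefl.

Lemma pm_tmapE x y (xy : (x <= y)%O) : pm_tmap x y = pm_map G xy.
Proof.
rewrite /pm_tmap; move: (erefl (x <= y)%O).
case: {2 3}(x <= y)%O => [xy'|]; last by rewrite xy.
by congr pm_map; exact: bool_irrelevance.
Qed.

Lemma pm_tmap_id x : pm_tmap x x = 1%:M.
Proof. by rewrite (pm_tmapE (lexx x)) pm_map_id. Qed.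

Lemma pm_tmap_comp x y z : (x <= y)%O -> (y <= z)%O ->
  pm_tmap x y *m pm_tmap y z = pm_tmap x z.
Proof.
move=> xy yz; rewrite (pm_tmapE xy) (pm_tmapE yz) (pm_tmapE (le_trans xy yz)).
by rewrite (pm_map_comp G xy yz).
Qed.

End TotalMap.

Section Isomorphism.
Variables (k : fieldType) (d : Order.disp_t) (P : finPOrderType d).

Definition pm_natural (F G : pmod k P) (a : forall x, 'M[k]_(pm_dim F x, pm_dim G x)) :=
  forall x y (xy : (x <= y)%O), pm_map F xy *m a y = a x *m pm_map G xy.

Lemma pm_natural_inv (F G : pmod k P) a b : @pm_natural F G a ->
  (forall x, a x *m b x = 1%:M) -> (forall x, b x *m a x = 1%:M) -> pm_natural b.
Proof.
move=> a_nat abK baK x y xy.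
by rewrite -[b x *m _]mulmx1 -(abK y) mulmxA -(mulmxA (b x)) a_nat mulmxA baK mul1mx.
Qed.

Lemma pmod_iso_refl (M : pmod k P) : pmod_iso M M.
Proof. by exists (fun=> 1%:M), (fun=> 1%:M); split=> *; rewrite ?mulmx1 ?mul1mx. Qed.

Lemma pmod_iso_sym (M N : pmod k P) : pmod_iso M N -> pmod_iso N M.
Proof.
move=> [a [b [abK baK a_nat]]]; exists b, a; split=> //.
exact: pm_natural_inv a_nat abK baK.
Qed.

Lemma pmod_iso_trans (M N O : pmod k P) :
  pmod_iso M N -> pmod_iso N O -> pmod_iso M O.
Proof.
move=> [a [b [abK baK a_nat]]] [a' [b' [abK' baK' a_nat']]].
exists (fun x => a x *m a' x), (fun x => b' x *m b x); split.
- by move=> x; rewrite mulmxA -(mulmxA (a x)) abK' mulmx1 abK.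
- by move=> x; rewrite mulmxA -(mulmxA (b' x)) baK mulmx1 baK'.
- by move=> x y xy; rewrite mulmxA a_nat -!mulmxA a_nat'.
Qed.

Lemma pullback_iso (dq : Order.disp_t) (Q : finPOrderType dq) (g : P -> Q)
    (gm : {homo g : x y / (x <= y)%O}) (G G' : pmod k Q) :
  pmod_iso G G' -> pmod_iso (pullback gm G) (pullback gm G').
Proof.
move=> [a [b [abK baK a_nat]]].
exists (fun x => a (g x)), (fun x => b (g x)).
by split=> [x|x|x y xy]; [exact: abK | exact: baK | exact: a_nat].
Qed.

End Isomorphism.

Lemma pullback_gi_comp (k : fieldType) (d1 : Order.disp_t) (Q1 : finPOrderType d1)
    (d2 : Order.disp_t) (Q2 : finPOrderType d2) (d : Order.disp_t) (P : finPOrderType d)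
    (a : galois_ins Q1 Q2) (b : galois_ins Q2 P) (G : pmod k Q1) :
  pmod_iso (pullback (gi_g_mono (gi_comp a b)) G)
           (pullback (gi_g_mono b) (pullback (gi_g_mono a) G)).
Proof. exact: pmod_iso_refl. Qed.

Definition cross_map (k : fieldType) (d : Order.disp_t) (P : finPOrderType d)
    (d1 : Order.disp_t) (Q1 : finPOrderType d1) (G1 : pmod k Q1)
    (d2 : Order.disp_t) (Q2 : finPOrderType d2) (G2 : pmod k Q2)
    (s1 : P -> Q1) (s2 : P -> Q2)
    (a : forall x, 'M[k]_(pm_dim G1 (s1 x), pm_dim G2 (s2 x)))
    (u : Q1) (x : P) (v : Q2) : 'M[k]_(pm_dim G1 u, pm_dim G2 v) :=
  pm_tmap G1 u (s1 x) *m a x *m pm_tmap G2 (s2 x) v.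

Section CrossMap.
Variables (k : fieldType) (d : Order.disp_t) (P : finPOrderType d).
Variables (d1 : Order.disp_t) (Q1 : finPOrderType d1) (G1 : pmod k Q1).
Variables (d2 : Order.disp_t) (Q2 : finPOrderType d2) (G2 : pmod k Q2).
Variables (s1 : P -> Q1) (s1m : {homo s1 : x y / (x <= y)%O}).
Variables (s2 : P -> Q2) (s2m : {homo s2 : x y / (x <= y)%O}).
Local Notation t1 := (pm_tmap G1).
Local Notation t2 := (pm_tmap G2).
Implicit Type a : forall x, 'M[k]_(pm_dim G1 (s1 x), pm_dim G2 (s2 x)).

Lemma pm_tmap_cross a u u' x v : (u <= u')%O -> (u' <= s1 x)%O ->
  t1 u u' *m cross_map a u' x v = cross_map a u x v.
Proof. by move=> uu' u'x; rewrite /cross_map !mulmxA pm_tmap_comp. Qed.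

Lemma cross_pm_tmap a u x v v' : (s2 x <= v)%O -> (v <= v')%O ->
  cross_map a u x v *m t2 v v' = cross_map a u x v'.
Proof. by move=> xv vv'; rewrite /cross_map -mulmxA pm_tmap_comp. Qed.

Variables (a : forall x, 'M[k]_(pm_dim G1 (s1 x), pm_dim G2 (s2 x)))
          (b : forall x, 'M[k]_(pm_dim G2 (s2 x), pm_dim G1 (s1 x))).
Hypothesis a_nat : pm_natural (F := pullback s1m G1) (G := pullback s2m G2) a.

Lemma pm_tmap_natural x y : (x <= y)%O ->
  t1 (s1 x) (s1 y) *m a y = a x *m t2 (s2 x) (s2 y).
Proof. by move=> xy; rewrite (pm_tmapE _ (s1m xy)) (pm_tmapE _ (s2m xy)) a_nat. Qed.

Lemma cross_map_shift u x y v : (x <= y)%O -> (u <= s1 x)%O -> (s2 y <= v)%O ->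
  cross_map a u x v = cross_map a u y v.
Proof.
move=> xy ux yv; rewrite /cross_map -(pm_tmap_comp _ (s2m xy) yv) !mulmxA.
by rewrite -(mulmxA _ (a x)) -pm_tmap_natural // mulmxA pm_tmap_comp // s1m.
Qed.

Hypothesis abK : forall x, a x *m b x = 1%:M.

Lemma cross_mapK u x v y u' : (u <= s1 x)%O -> (x <= y)%O ->
    (s2 x <= v)%O -> (v <= s2 y)%O -> (s1 y <= u')%O ->
  cross_map a u x v *m cross_map b v y u' = t1 u u'.
Proof.
move=> ux xy xv vy yu'; have uy : (u <= s1 y)%O := le_trans ux (s1m xy).
rewrite [cross_map b _ _ _]/cross_map !mulmxA cross_pm_tmap //.
rewrite (@cross_map_shift u x y) // /cross_map pm_tmap_id mulmx1.
by rewrite -(mulmxA _ (a y)) abK mulmx1 pm_tmap_comp.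
Qed.

End CrossMap.

Lemma coupling_cost_ge0 (R : realType) (dq : Order.disp_t) (Q : finPOrderType dq)
    (d : Order.disp_t) (P : finPOrderType d) (dP : P -> P -> R) (fg hi : galois_ins Q P) :
  0 <= coupling_cost dP fg hi.
Proof. exact: bigmax_ge_id. Qed.

Section Glue.
Variables (k : fieldType) (d : Order.disp_t) (P : finPOrderType d).
Variables (d1 : Order.disp_t) (Q1 : finPOrderType d1) (hi1 : galois_ins Q1 P) (G1 : pmod k Q1).
Variables (d2 : Order.disp_t) (Q2 : finPOrderType d2) (fg2 : galois_ins Q2 P) (G2 : pmod k Q2).
Local Notation h1 := (gi_f hi1).
Local Notation i1 := (gi_g hi1).
Local Notation f2 := (gi_f fg2).
Local Notation g2 := (gi_g fg2).
Local Notation t1 := (pm_tmap G1).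
Local Notation t2 := (pm_tmap G2).

Variables (alpha : forall x, 'M[k]_(pm_dim G1 (i1 x), pm_dim G2 (g2 x)))
          (beta : forall x, 'M[k]_(pm_dim G2 (g2 x), pm_dim G1 (i1 x))).
Hypotheses (alphaK : forall x, alpha x *m beta x = 1%:M)
           (betaK : forall x, beta x *m alpha x = 1%:M)
           (alpha_nat : pm_natural (F := pullback (gi_g_mono hi1) G1)
                                   (G := pullback (gi_g_mono fg2) G2) alpha).

Let beta_nat := pm_natural_inv alpha_nat alphaK betaK.
Local Notation cross12 := (cross_map alpha).
Local Notation cross21 := (cross_map beta).

(* The glued poset is the union, inside Q1 x Q2, of the images of
   [u |-> (u, g2 (h1 u))] and [v |-> (i1 (f2 v), v)]; the glued module is G1 on
   the first image, overlap included, and G2 on the rest. *)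
Definition glue_pt (q : Q1 *p Q2) : P := h1 q.1.
Definition on_fst (q : Q1 *p Q2) : bool := q.2 == g2 (glue_pt q).
Definition glued (q : Q1 *p Q2) : bool := on_fst q || (q.1 == i1 (f2 q.2)).

Definition glue := {q : Q1 *p Q2 | glued q}.
HB.instance Definition _ := [isSub of glue for @sval _ glued].
HB.instance Definition _ := [Finite of glue by <:].
HB.instance Definition _ := [SubChoice_isSubPOrder of glue by <: with Order.Disp tt tt].

Lemma glue_ptE q : glued q -> glue_pt q = f2 q.2.
Proof. by case: q => u v /orP[] /eqP /= ->; rewrite /glue_pt gi_retr. Qed.

Variant on_fst_spec (q : Q1 *p Q2) : bool -> Type :=
  | OnFst of q.2 = g2 (glue_pt q) : on_fst_spec q true
  | OnSnd of q.1 = i1 (glue_pt q) : on_fst_spec q false.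

Lemma on_fstP q : glued q -> on_fst_spec q (on_fst q).
Proof.
move=> qG; case: (boolP (on_fst q)) => [/eqP|nq]; first exact: OnFst.
apply: OnSnd; rewrite glue_ptE //.
by move: qG; rewrite /glued (negbTE nq) => /eqP.
Qed.

Lemma glue_le_fst q : (q.1 <= i1 (glue_pt q))%O.
Proof. exact: gi_unit. Qed.

Lemma glue_le_snd q : glued q -> (q.2 <= g2 (glue_pt q))%O.
Proof. by move/glue_ptE->; exact: gi_unit. Qed.

Lemma glue_pt_mono p q : (p <= q)%O -> (glue_pt p <= glue_pt q)%O.
Proof. by case/andP=> pq _; exact: gi_f_mono. Qed.

Definition glue_dim (q : Q1 *p Q2) : nat :=
  if on_fst q then pm_dim G1 q.1 else pm_dim G2 q.2.

Definition glue_map (p q : Q1 *p Q2) : 'M[k]_(glue_dim p, glue_dim q) :=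
  match on_fst p as b return 'M_(if b then _ else _, _) with
  | true => match on_fst q as c return 'M_(_, if c then _ else _) with
    | true => t1 p.1 q.1
    | false => cross12 p.1 (glue_pt p) q.2 end
  | false => match on_fst q as c return 'M_(_, if c then _ else _) with
    | true => cross21 p.2 (glue_pt p) q.1
    | false => t2 p.2 q.2 end
  end.

Lemma glue_map_id q : glue_map q q = 1%:M.
Proof. by rewrite /glue_map /glue_dim; case: (on_fst q); rewrite pm_tmap_id. Qed.

Lemma glue_map_comp (p q r : glue) : (p <= q)%O -> (q <= r)%O ->
  glue_map (val p) (val q) *m glue_map (val q) (val r) = glue_map (val p) (val r).
Proof.
case: p q r => [p pG] [q qG] [r rG] pq qr.
have [pq1 pq2] := andP pq; have [qr1 qr2] := andP qr.
have xy := glue_pt_mono pq; have yz := glue_pt_mono qr; rewrite /= in pq1 pq2 qr1 qr2.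
rewrite /glue_map /glue_dim /=.
case: (on_fstP pG) => ep; case: (on_fstP qG) => eq; case: (on_fstP rG) => er.
- exact: pm_tmap_comp.
- by rewrite pm_tmap_cross ?glue_le_fst // (cross_map_shift alpha_nat xy) ?glue_le_fst -?eq.
- by rewrite (cross_mapK alpha_nat alphaK) ?glue_le_fst ?glue_le_snd -?ep -?eq.
- by rewrite cross_pm_tmap -?ep.
- by rewrite cross_pm_tmap -?ep.
- by rewrite (cross_mapK beta_nat betaK) ?glue_le_fst ?glue_le_snd -?ep -?eq.
- by rewrite pm_tmap_cross ?glue_le_snd // (cross_map_shift beta_nat xy) ?glue_le_snd -?eq.
- exact: pm_tmap_comp.
Qed.

Definition glue_mod : pmod k glue :=
  @PMod k _ glue (fun q => glue_dim (val q)) (fun p q _ => glue_map (val p) (val q))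
    (fun q _ => glue_map_id (val q)) (fun p q r pq qr _ => esym (glue_map_comp pq qr)).

Lemma glued_inj_fst u : glued (u, g2 (h1 u)).
Proof. by rewrite /glued /on_fst eqxx. Qed.

Lemma glued_inj_snd v : glued (i1 (f2 v), v).
Proof. by rewrite /glued eqxx orbT. Qed.

Definition glue_inj_fst u : glue := exist glued _ (glued_inj_fst u).
Definition glue_inj_snd v : glue := exist glued _ (glued_inj_snd v).

Lemma glue_inj_fst_mono : {homo glue_inj_fst : u v / (u <= v)%O}.
Proof. by move=> u v uv; apply/andP; split=> //=; apply/gi_g_mono/gi_f_mono. Qed.

Lemma glue_inj_snd_mono : {homo glue_inj_snd : u v / (u <= v)%O}.
Proof. by move=> u v uv; apply/andP; split=> //=; apply/gi_g_mono/gi_f_mono. Qed.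

Lemma glue_fst_adj (q : glue) u : ((val q).1 <= u)%O = (q <= glue_inj_fst u)%O.
Proof.
apply/idP/andP => [qu|[] //]; split=> //=.
by apply: le_trans (glue_le_snd (valP q)) _; apply/gi_g_mono/gi_f_mono.
Qed.

Lemma glue_snd_adj (q : glue) v : ((val q).2 <= v)%O = (q <= glue_inj_snd v)%O.
Proof.
apply/idP/andP => [qv|[] //]; split=> //=.
rewrite (le_trans (glue_le_fst (val q))) // glue_ptE ?(valP q) //.
by apply/gi_g_mono/gi_f_mono.
Qed.

Lemma glue_fst_mono : {homo (fun q : glue => (val q).1) : p q / (p <= q)%O}.
Proof. by move=> p q /andP[]. Qed.

Lemma glue_snd_mono : {homo (fun q : glue => (val q).2) : p q / (p <= q)%O}.
Proof. by move=> p q /andP[]. Qed.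

Definition glue_fst_gi : galois_ins glue Q1 :=
  GIns glue_fst_mono glue_inj_fst_mono glue_fst_adj (fun _ => erefl).

Definition glue_snd_gi : galois_ins glue Q2 :=
  GIns glue_snd_mono glue_inj_snd_mono glue_snd_adj (fun _ => erefl).

Lemma glue_iso_fst : pmod_iso (pullback (gi_g_mono glue_fst_gi) glue_mod) G1.
Proof.
pose q u : Q1 *p Q2 := (u, g2 (h1 u)).
have qT u : on_fst (q u) by rewrite /on_fst eqxx.
pose a u : 'M_(glue_dim (q u), pm_dim G1 u) :=
  match on_fst (q u) as b return 'M[k]_(if b then _ else _, _) with
  | true => 1%:M | false => 0 end.
pose b u : 'M_(pm_dim G1 u, glue_dim (q u)) :=
  match on_fst (q u) as b return 'M[k]_(_, if b then _ else _) with
  | true => 1%:M | false => 0 end.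
exists a, b; split=> [u|u|u v uv]; rewrite /a /b /= /glue_map /glue_dim.
- by case: (on_fst (q u)) (qT u) => // _; rewrite mulmx1.
- by case: (on_fst (q u)) (qT u) => // _; rewrite mulmx1.
- case: (on_fst (q u)) (qT u) => // _; case: (on_fst (q v)) (qT v) => // _.
  by rewrite mulmx1 mul1mx (pm_tmapE _ uv).
Qed.

Definition glue_to_snd (q : Q1 *p Q2) : 'M[k]_(glue_dim q, pm_dim G2 q.2) :=
  match on_fst q as b return 'M_(if b then _ else _, _) with
  | true => cross12 q.1 (glue_pt q) q.2 | false => 1%:M end.

Definition glue_of_snd (q : Q1 *p Q2) : 'M[k]_(pm_dim G2 q.2, glue_dim q) :=
  match on_fst q as b return 'M_(_, if b then _ else _) with
  | true => cross21 q.2 (glue_pt q) q.1 | false => 1%:M end.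

Lemma glue_to_sndK q : glued q -> q.1 = i1 (glue_pt q) ->
  glue_to_snd q *m glue_of_snd q = 1%:M.
Proof.
move=> qG q1E; rewrite /glue_to_snd /glue_of_snd /glue_dim.
case: (on_fstP qG) => [q2E|_]; last exact: mulmx1.
rewrite (cross_mapK alpha_nat alphaK) ?glue_le_fst ?glue_le_snd -?q2E -?q1E //.
exact: pm_tmap_id.
Qed.

Lemma glue_of_sndK q : glued q -> q.1 = i1 (glue_pt q) ->
  glue_of_snd q *m glue_to_snd q = 1%:M.
Proof.
move=> qG q1E; rewrite /glue_to_snd /glue_of_snd /glue_dim.
case: (on_fstP qG) => [q2E|_]; last exact: mulmx1.
rewrite (cross_mapK beta_nat betaK) ?glue_le_fst ?glue_le_snd -?q2E -?q1E //.
exact: pm_tmap_id.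
Qed.

Lemma glue_to_snd_natural (p q : glue) : (p <= q)%O ->
  glue_map (val p) (val q) *m glue_to_snd (val q) =
  glue_to_snd (val p) *m t2 (val p).2 (val q).2.
Proof.
case: p q => [p pG] [q qG] pq; have [pq1 pq2] := andP pq; have xy := glue_pt_mono pq.
rewrite /glue_map /glue_to_snd /glue_dim.
case: (on_fstP pG) => ep; case: (on_fstP qG) => eq.
- rewrite pm_tmap_cross ?glue_le_fst // cross_pm_tmap -?ep //.
  by rewrite (cross_map_shift alpha_nat xy) ?glue_le_fst // -eq.
- by rewrite mulmx1 cross_pm_tmap -?ep.
- by rewrite mul1mx (cross_mapK beta_nat betaK) ?glue_le_fst ?glue_le_snd -?ep -?eq.
- by rewrite mulmx1 mul1mx.
Qed.

Lemma glue_iso_snd : pmod_iso (pullback (gi_g_mono glue_snd_gi) glue_mod) G2.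
Proof.
have q1E v : i1 (f2 v) = i1 (glue_pt (i1 (f2 v), v)) by rewrite glue_ptE ?glued_inj_snd.
exists (fun v => glue_to_snd (i1 (f2 v), v)), (fun v => glue_of_snd (i1 (f2 v), v)).
split=> [v|v|v w vw]; first exact: glue_to_sndK (glued_inj_snd v) (q1E v).
  exact: glue_of_sndK (glued_inj_snd v) (q1E v).
rewrite -(pm_tmapE G2 vw).
exact: glue_to_snd_natural (glue_inj_snd_mono vw).
Qed.

Variables (fg1 : galois_ins Q1 P) (hi2 : galois_ins Q2 P).

Definition glue_fg : galois_ins glue P := gi_comp glue_fst_gi fg1.
Definition glue_hi : galois_ins glue P := gi_comp glue_snd_gi hi2.

Lemma glue_coupling (M O : pmod k P) :
    pmod_iso (pullback (gi_g_mono fg1) G1) M -> pmod_iso (pullback (gi_g_mono hi2) G2) O ->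
  galois_coupling M O glue_fg glue_hi glue_mod.
Proof.
move=> isoM isoO; split; apply: pmod_iso_trans (pullback_gi_comp _ _ _) _.
- exact: pmod_iso_trans (pullback_iso _ glue_iso_fst) isoM.
- exact: pmod_iso_trans (pullback_iso _ glue_iso_snd) isoO.
Qed.

Lemma glue_cost (R : realType) (dP : P -> P -> R)
    (dP_triangle : forall x y z, dP x z <= dP x y + dP y z) :
  coupling_cost dP glue_fg glue_hi <= coupling_cost dP fg1 hi1 + coupling_cost dP fg2 hi2.
Proof.
rewrite {1}/coupling_cost; apply: bigmax_le => [|[q qG] _ /=].
  by rewrite addr_ge0 ?coupling_cost_ge0.
apply: le_trans (dP_triangle _ (h1 q.1) _) _; apply: lerD.
  exact: (le_bigmax _ (fun u => dP (gi_f fg1 u) (h1 u))).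
rewrite -[h1 q.1]/(glue_pt q) glue_ptE //.
exact: (le_bigmax _ (fun v => dP (f2 v) (gi_f hi2 v))).
Qed.

End Glue.

Lemma galois_coupling_comp (k : fieldType) (R : realType) (d : Order.disp_t)
    (P : finPOrderType d) (dP : P -> P -> R)
    (dP_triangle : forall x y z, dP x z <= dP x y + dP y z) (M N O : pmod k P)
    (d1 : Order.disp_t) (Q1 : finPOrderType d1) (fg1 hi1 : galois_ins Q1 P) (G1 : pmod k Q1)
    (d2 : Order.disp_t) (Q2 : finPOrderType d2) (fg2 hi2 : galois_ins Q2 P) (G2 : pmod k Q2) :
    galois_coupling M N fg1 hi1 G1 -> galois_coupling N O fg2 hi2 G2 ->
  exists (dq : Order.disp_t) (Q : finPOrderType dq) (fg hi : galois_ins Q P) (G : pmod k Q),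
    galois_coupling M O fg hi G /\
    coupling_cost dP fg hi <= coupling_cost dP fg1 hi1 + coupling_cost dP fg2 hi2.
Proof.
move=> [isoM isoN1] [isoN2 isoO].
have [alpha [beta [alphaK betaK alpha_nat]]] := pmod_iso_trans isoN1 (pmod_iso_sym isoN2).
exists _, _, (glue_fg hi1 fg2 fg1), (glue_hi hi1 fg2 hi2), (glue_mod alphaK betaK alpha_nat).
split; [exact: glue_coupling isoM isoO | exact: glue_cost].
Qed.

Local Open Scope ereal_scope.

Lemma ereal_inf_leD (R : realType) (S1 S2 S3 : set (\bar R)) :
    (forall c, S1 c -> 0 <= c) -> (forall c, S2 c -> 0 <= c) ->
    (forall c1 c2, S1 c1 -> S2 c2 -> exists2 c3, S3 c3 & c3 <= c1 + c2) ->
  ereal_inf S3 <= ereal_inf S1 + ereal_inf S2.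
Proof.
move=> S1_ge0 S2_ge0 S123.
have inf1_ge0 : 0 <= ereal_inf S1 by exact: le_ereal_inf_tmp.
have inf2_ge0 : 0 <= ereal_inf S2 by exact: le_ereal_inf_tmp.
have [->|] := eqVneq (ereal_inf S1 + ereal_inf S2) +oo; first exact: leey.
rewrite -ltey -ge0_fin_numE ?adde_ge0 // fin_numD => /andP[fin1 fin2].
apply/lee_addgt0Pr => e e_gt0; have e2_gt0 : (0 < e / 2)%R by rewrite divr_gt0.
have [c1 S1c1 c1_lt] := lb_ereal_inf_adherent e2_gt0 fin1.
have [c2 S2c2 c2_lt] := lb_ereal_inf_adherent e2_gt0 fin2.
have [c3 S3c3 c3_le] := S123 _ _ S1c1 S2c2.
apply: le_trans (ereal_inf_lbound S3c3) _; apply: (le_trans c3_le).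
apply: le_trans (leeD (ltW c1_lt) (ltW c2_lt)) _.
by rewrite addeACA -EFinD -splitr.
Qed.

Section TransportDistance.
Local Open Scope classical_set_scope.
Variables (k : fieldType) (R : realType) (d : Order.disp_t) (P : finPOrderType d).
Variable dP : P -> P -> R.

Definition coupling_costs (M N : pmod k P) : set (\bar R) :=
  [set c | exists (dq : Order.disp_t) (Q : finPOrderType dq)
      (fg hi : galois_ins Q P) (G : pmod k Q),
      galois_coupling M N fg hi G /\ c = (coupling_cost dP fg hi)%:E].

Lemma coupling_costs_ge0 (M N : pmod k P) c : coupling_costs M N c -> 0 <= c.
Proof. by move=> [dq [Q [fg [hi [G [_ ->]]]]]]; rewrite lee_fin coupling_cost_ge0. Qed.

Lemma dGT_le_cost (M N : pmod k P) (dq : Order.disp_t) (Q : finPOrderType dq)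
    (fg hi : galois_ins Q P) (G : pmod k Q) :
  galois_coupling M N fg hi G -> dGT dP M N <= (coupling_cost dP fg hi)%:E.
Proof. by move=> MN; apply: ereal_inf_lbound; exists dq, Q, fg, hi, G. Qed.

Lemma dGT_ge0 (M N : pmod k P) : 0 <= dGT dP M N.
Proof. exact/le_ereal_inf_tmp/coupling_costs_ge0. Qed.

Lemma dGT_self (M : pmod k P) : (forall x, dP x x = 0%R) -> dGT dP M M = 0.
Proof.
move=> dP0; apply/le_anti; rewrite dGT_ge0 andbT.
apply: le_trans (dGT_le_cost (fg := gi_id P) (hi := gi_id P) (G := M) _) _.
  by split; exact: pmod_iso_refl.
by rewrite lee_fin; apply: bigmax_le => // x _; rewrite dP0.
Qed.

Lemma dGT_le_sym (M N : pmod k P) : (forall x y, dP x y = dP y x) ->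
  dGT dP M N <= dGT dP N M.
Proof.
move=> dPC; apply: le_ereal_inf_tmp => _ [dq [Q [fg [hi [G [[NG MG] ->]]]]]].
have -> : coupling_cost dP fg hi = coupling_cost dP hi fg.
  by apply: eq_bigr => q _; exact: dPC.
exact: dGT_le_cost (conj MG NG).
Qed.

Lemma dGT_triangle (M N O : pmod k P) :
    (forall x y z, (dP x z <= dP x y + dP y z)%R) ->
  dGT dP M O <= dGT dP M N + dGT dP N O.
Proof.
move=> dP_triangle.
apply: ereal_inf_leD; [exact: coupling_costs_ge0 | exact: coupling_costs_ge0 |].
move=> _ _ [dq1 [Q1 [fg1 [hi1 [G1 [MN ->]]]]]] [dq2 [Q2 [fg2 [hi2 [G2 [NO ->]]]]]].
have [dq [Q [fg [hi [G [MO le_cost]]]]]] := galois_coupling_comp dP_triangle MN NO.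
by exists (coupling_cost dP fg hi)%:E; [exists dq, Q, fg, hi, G | rewrite -EFinD lee_fin].
Qed.

End TransportDistance.

Theorem proposition3p6 (k : fieldType) (R : realType) (d : Order.disp_t)
    (P : finPOrderType d) (dP : P -> P -> R) (hdP : is_metric dP) :
  forall M N O : pmod k P,
    [/\ dGT dP M M = 0%E,
        dGT dP M N = dGT dP N M &
        (dGT dP M O <= dGT dP M N + dGT dP N O)%E].
Proof.
case: hdP => dP0 dPC dP_triangle M N O; split.
- by apply: dGT_self => x; apply/dP0.
- by apply/le_anti; rewrite !dGT_le_sym.
- exact: dGT_triangle.
Qed.
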